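(* Let $\Omega=\{z:\frac12<|z|<1\}$ and $\gamma_n=\frac{1-2^{-2(n+1)}}{2(n+1)}$ for $n\in\mathbb{Z}\setminus\{-1\}$, $\gamma_{-1}=\log2$. Let $\mathcal{H}$ be the Hilbert space of analytic functions on $\Omega$ of the form $f=\sum_{n\in\mathbb{Z}}\lambda_nf_n$ with $(\lambda_n)\in\ell^2(\mathbb{Z})$, normed by $\|f\|=(\sum_n|\lambda_n|^2)^{1/2}$, where $f_n(z)=(\gamma_n^{-1/2}+z)z^n$ for $n\ge0$ and $f_n(z)=\gamma_n^{-1/2}z^n$ for $n\le-1$ (i.e. $\mathcal{H}=\ell^2_{a,b}(\Omega)$ with $a_n=\gamma_n^{-1/2}$, $b_n=1$ for $n\ge0$, $b_n=0$ for $n\le-1$). Then the inclusion of $\mathcal{H}$ into the Bergman space $A^2(\Omega)$ is continuous and has dense range. Moreover, if $w_n=4$ for all $n\ge0$ and $w_n=\frac14$ for all $n\le-1$, then the weighted backward shift $B_w$ on $\mathcal{H}$ is topologically mixing and is similar to a compact perturbation of a bilateral weighted backward shift on $\ell^2(\mathbb{Z})$.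
   Context: The Bergman space $A^2(\Omega)$ consists of holomorphic $f$ on $\Omega$ with $\|f\|^2=\frac1{2\pi}\int_\Omega|f(z)|^2\,dA(z)<\infty$ ($dA$ area measure); equivalently $\|f\|^2=\sum_n|\widehat f(n)|^2\gamma_n$ for $f=\sum_n\widehat f(n)z^n$. $B_w$ acts by $B_w(\sum_n\widehat f(n)z^n)=\sum_nw_n\widehat f(n)z^{n-1}$. A bilateral weighted backward shift on $\ell^2(\mathbb{Z})$ is $e_n\mapsto\alpha_ne_{n-1}$ with bounded weights. $T$ is topologically mixing if for all nonempty open $U_1,U_2$, $\{k:T^k(U_1)\cap U_2\ne\varnothing\}$ is cofinite. *)

From HB Require Import structures.
From mathcomp Require Import all_boot all_order all_algebra.
From mathcomp Require Import all_classical all_reals all_analysis.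
From mathcomp Require Import complex.
Set Implicit Arguments. Unset Strict Implicit. Unset Printing Implicit Defensive.
Import Order.TTheory GRing.Theory Num.Theory.
Import numFieldNormedType.Exports.
Local Open Scope ring_scope.
Local Open Scope classical_set_scope.

(* An analytic function on the annulus Omega = {1/2 < |z| < 1} is identified *)
(* with its Laurent coefficient sequence (f z = sum_{n in Z} c n z^n); see   *)

Section Defs.
Variable R : realType.
Local Notation C := (R[i]).

Definition sqn (x : C) : R := (@complex.Re R x) ^+ 2 + (@complex.Im R x) ^+ 2.

Definition zpartial (v : int -> R) (N : nat) : R :=
  \sum_(k < N) (v (k%:Z) + v (- (k.+1)%:Z)).

(* for nonnegative v : the series sum_{n in Z} v n converges *)
Definition zsummable (v : int -> R) : Prop :=
  exists M : R, forall N : nat, zpartial v N <= M.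

Definition zsum (v : int -> R) : R :=
  limn (series (fun k : nat => v (k%:Z) + v (- (k.+1)%:Z))).

Definition subs (x y : int -> C) : int -> C := fun n => x n - y n.

Definition l2 (u : int -> C) : Prop := zsummable (fun n => sqn (u n)).
Definition l2sq (u : int -> C) : R := zsum (fun n => sqn (u n)).

Definition gamma (n : int) : R :=
  if n == -1 then ln (2 : R)
  else (1 - (2 : R) ^ (- (2 * (n + 1)))) / (2 * (n + 1)%:~R).

(* Bergman space A^2(Omega), via Laurent coefficients:
   ||f||^2 = sum_n |f^(n)|^2 gamma_n *)
Definition A2 (c : int -> C) : Prop := zsummable (fun n => gamma n * sqn (c n)).
Definition a2sq (c : int -> C) : R := zsum (fun n => gamma n * sqn (c n)).

Definition acoef (n : int) : R := (Num.sqrt (gamma n))^-1.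
Definition bcoef (n : int) : R := if 0 <= n then 1 else 0.

(* Laurent coefficients of f_n(z) = a_n z^n + b_n z^{n+1} *)
Definition fn (n : int) : int -> C :=
  fun m => if m == n then ((acoef n)%:C)%C else if m == n + 1 then ((bcoef n)%:C)%C else 0.

(* Laurent coefficients of sum_n lam_n f_n : coefficient m only receives
   contributions from n = m - 1 and n = m *)
Definition Phi (lam : int -> C) : int -> C :=
  fun m => lam (m - 1) * fn (m - 1) m + lam m * fn m m.

(* weighted backward shift on Laurent coefficients / on l^2(Z):
   (sum c_n z^n) |-> sum w_n c_n z^{n-1}, i.e. e_n |-> w_n e_{n-1} *)
Definition Bw (w : int -> C) (c : int -> C) : int -> C :=
  fun n => w (n + 1) * c (n + 1).

Definition w4 (n : int) : C := if 0 <= n then 4 else 4^-1.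

Definition l2_maps (F : (int -> C) -> (int -> C)) : Prop :=
  forall x, l2 x -> l2 (F x).

Definition l2_linear (F : (int -> C) -> (int -> C)) : Prop :=
  forall (a : C) x y, l2 x -> l2 y ->
    F (fun n => a * x n + y n) = (fun n => a * F x n + F y n).

Definition l2_continuous (F : (int -> C) -> (int -> C)) : Prop :=
  forall x, l2 x -> forall e : R, 0 < e -> exists d : R, 0 < d /\
    forall y, l2 y -> l2sq (subs y x) < d -> l2sq (subs (F y) (F x)) < e.

Definition l2_open (U : (int -> C) -> Prop) : Prop :=
  (forall x, U x -> l2 x) /\
  forall x, U x -> exists e : R, 0 < e /\
    forall y, l2 y -> l2sq (subs y x) < e -> U y.

Definition top_mixing (T : (int -> C) -> (int -> C)) : Prop :=
  forall U1 U2, l2_open U1 -> l2_open U2 -> (exists x, U1 x) -> (exists x, U2 x) ->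
    exists N : nat, forall k : nat, (N <= k)%N -> exists x, U1 x /\ U2 (iter k T x).

Definition l2_compact (K : (int -> C) -> (int -> C)) : Prop :=
  l2_maps K /\ l2_linear K /\
  forall xs : nat -> int -> C, (forall j, l2 (xs j) /\ l2sq (xs j) <= 1) ->
    exists (phi : nat -> nat) (y : int -> C),
      (forall j, (phi j < phi j.+1)%N) /\ l2 y /\
      (fun j => l2sq (subs (K (xs (phi j))) y)) @ \oo --> (0 : R).

Definition bounded_weights (alpha : int -> C) : Prop :=
  exists M : R, forall n, sqn (alpha n) <= M.

End Defs.

(* Multiplying Laurent coefficients by sqrt(gamma_n) (the map Dg) is an isometry of
   A^2(Omega) onto l^2(Z).  In the coordinates lam of H the inclusion becomes
   embed := Dg o Phi, i.e. (embed lam)_n = lam_n + sqrt(gamma_n) b_(n-1) lam_(n-1): the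
   identity plus a lower triangular weighted shift with weights at most 1/2, hence an
   isomorphism of l^2(Z).  So H = A^2(Omega) with equivalent norms, which gives
   continuity and (full, hence dense) range, and embed conjugates B_w on H to the
   bilateral weighted backward shift B_alpha with alpha_n = w_n sqrt(gamma_(n-1) / gamma_n).
   As gamma_n decays like 1/(2n) for n -> +oo and grows like 4^|n| / (2|n|) for
   n -> -oo, |alpha_n|^2 >= 2 for n >= 1 and |alpha_n|^2 <= 1/2 for n <= -2.  Hence the
   powers of B_alpha, and their right inverses F_k (weighted forward shifts), tend to 0
   on finitely supported vectors, and B_alpha is mixing by Kitai's criterion. *)

From HB Require Import structures.
From mathcomp Require Import all_boot all_order all_algebra.
From mathcomp Require Import all_classical all_reals all_analysis.
From mathcomp Require Import complex.
From mathcomp Require Import zify ring lra.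
Import Order.TTheory GRing.Theory Num.Theory.
Import numFieldNormedType.Exports.
Local Open Scope ring_scope.
Set Implicit Arguments. Unset Strict Implicit. Unset Printing Implicit Defensive.

Section ZSums.
Variable R : realType.
Implicit Types (u v w : int -> R) (N : nat).

Definition nonneg v := forall n, 0 <= v n.

Lemma zpartial0 v : zpartial v 0 = 0.
Proof. by rewrite /zpartial big_ord0. Qed.

Lemma zpartialS v N : zpartial v N.+1 = zpartial v N + (v N%:Z + v (- N.+1%:Z)).
Proof. by rewrite /zpartial big_ord_recr. Qed.

Lemma ler_zpartial v w N : (forall n, v n <= w n) -> zpartial v N <= zpartial w N.
Proof. by move=> vw; apply: ler_sum => i _; apply: lerD. Qed.

Lemma zpartialZ (a : R) v N : zpartial (fun n => a * v n) N = a * zpartial v N.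
Proof. by rewrite /zpartial mulr_sumr; apply: eq_bigr => i _; rewrite mulrDr. Qed.

Lemma zpartialD v w N :
  zpartial (fun n => v n + w n) N = zpartial v N + zpartial w N.
Proof. by rewrite /zpartial -big_split; apply: eq_bigr => i _ /=; ring. Qed.

Lemma nondecreasing_zpartial v : nonneg v -> {homo zpartial v : N M / (N <= M)%N >-> N <= M}.
Proof.
move=> v0 N M /subnK <-; elim: (M - N)%N => [|k IH]; first by rewrite add0n.
by rewrite addSn zpartialS (le_trans IH) // lerDl addr_ge0.
Qed.

Lemma zsum_sup v : nonneg v -> zsummable v -> zsum v = sup (range (zpartial v)).
Proof.
move=> v0 [M vM]; rewrite /zsum.
have -> : series (fun k : nat => v k%:Z + v (- k.+1%:Z)) = zpartial v.
  by apply: funext => N; rewrite /series /= big_mkord.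
apply: cvg_lim => //; apply: nondecreasing_cvgn; first exact: nondecreasing_zpartial.
by exists M => _ [N _ <-].
Qed.

Lemma zpartial_le_zsum v N : nonneg v -> zsummable v -> zpartial v N <= zsum v.
Proof.
move=> v0 vs; rewrite zsum_sup //; case: vs => M vM.
by apply: ub_le_sup; [exists M => _ [k _ <-]|exists N].
Qed.

Lemma zsum_ub v (M : R) : nonneg v -> (forall N, zpartial v N <= M) ->
  zsummable v /\ zsum v <= M.
Proof.
move=> v0 vM; have vs : zsummable v by exists M.
split => //; rewrite zsum_sup //; apply: ge_sup; first by exists (zpartial v 0), 0%N.
by move=> _ [k _ <-].
Qed.

Lemma zsum_ge0 v : nonneg v -> zsummable v -> 0 <= zsum v.
Proof. by move=> v0 vs; rewrite -(zpartial0 v) zpartial_le_zsum. Qed.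

Lemma zsum_adherent v (e : R) : nonneg v -> zsummable v -> 0 < e ->
  exists N, zsum v - e < zpartial v N.
Proof.
move=> v0 vs e0; rewrite (zsum_sup v0 vs).
have sup_v : has_sup (range (zpartial v)).
  split; first by exists (zpartial v 0), 0%N.
  by case: vs => M vM; exists M => _ [k _ <-].
by have [_ [N _ <-] ?] := sup_adherent e0 sup_v; exists N.
Qed.

Lemma zsum_le_scale v u (a : R) : nonneg v -> nonneg u -> zsummable u -> 0 <= a ->
  (forall n, v n <= a * u n) -> zsummable v /\ zsum v <= a * zsum u.
Proof.
move=> v0 u0 us a0 vu; apply: zsum_ub => // N.
rewrite (le_trans (ler_zpartial N vu)) // zpartialZ ler_wpM2l //.
exact: zpartial_le_zsum.
Qed.

Lemma zsum_le_combination v u w (a b : R) : nonneg v -> nonneg u -> nonneg w ->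
  zsummable u -> zsummable w -> 0 <= a -> 0 <= b ->
  (forall n, v n <= a * u n + b * w n) ->
  zsummable v /\ zsum v <= a * zsum u + b * zsum w.
Proof.
move=> v0 u0 w0 us ws a0 b0 vuw; apply: zsum_ub => // N.
rewrite (le_trans (ler_zpartial N vuw)) // zpartialD !zpartialZ.
by rewrite lerD // ler_wpM2l // zpartial_le_zsum.
Qed.

Lemma zpartial_shift1 u N :
  zpartial (fun n => u (n + 1)) N + u (- N%:Z) = zpartial u N + u N%:Z.
Proof.
elim: N => [|N IH]; first by rewrite !zpartial0 oppr0.
rewrite !zpartialS (_ : - N.+1%:Z + 1 = - N%:Z); last by lia.
rewrite (_ : N%:Z + 1 = N.+1%:Z); last by lia.
by move: IH; lra.
Qed.

Lemma zpartial_shiftN1 u N :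
  zpartial (fun n => u (n - 1)) N + u (N%:Z - 1) = zpartial u N + u (- N.+1%:Z).
Proof.
elim: N => [|N IH]; first by rewrite !zpartial0.
rewrite !zpartialS (_ : - N.+1%:Z - 1 = - N.+2%:Z); last by lia.
rewrite (_ : N.+1%:Z - 1 = N%:Z); last by lia.
by move: IH; lra.
Qed.

Lemma zsum_shift1 u : nonneg u -> zsummable u ->
  zsummable (fun n => u (n + 1)) /\ zsum (fun n => u (n + 1)) <= zsum u.
Proof.
move=> u0 us; apply: zsum_ub => [n|N]; first exact: u0.
apply: le_trans (zpartial_le_zsum N.+1 u0 us); rewrite zpartialS.
have := zpartial_shift1 u N; have := u0 (- N%:Z); have := u0 (- N.+1%:Z); lra.
Qed.

Lemma zsum_shiftN1 u : nonneg u -> zsummable u ->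
  zsummable (fun n => u (n - 1)) /\ zsum (fun n => u (n - 1)) <= zsum u.
Proof.
move=> u0 us; apply: zsum_ub => [n|N]; first exact: u0.
apply: le_trans (zpartial_le_zsum N.+1 u0 us); rewrite zpartialS.
have := zpartial_shiftN1 u N; have := u0 (N%:Z - 1); have := u0 N%:Z; lra.
Qed.

Lemma zsum_shift u (k : int) : nonneg u -> zsummable u ->
  zsummable (fun n => u (n + k)) /\ zsum (fun n => u (n + k)) <= zsum u.
Proof.
move=> u0 us; elim/int_rec: k => [|k [sk uk]|k [sk uk]].
- by under eq_fun do rewrite addr0.
- have -> : (fun n => u (n + k.+1%:Z)) = (fun n => u (n + 1 + k%:Z)).
    by apply: funext => n; congr u; lia.
  have [? ?] := zsum_shift1 (fun n => u0 _) sk.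
  by split=> //; apply: le_trans uk.
- have -> : (fun n => u (n - k.+1%:Z)) = (fun n => u (n - 1 - k%:Z)).
    by apply: funext => n; congr u; lia.
  have [? ?] := zsum_shiftN1 (fun n => u0 _) sk.
  by split=> //; apply: le_trans uk.
Qed.

End ZSums.

Section L2.
Variable R : realType.
Local Notation C := R[i].
Local Notation "x %:C" := (real_complex R x).
Implicit Types (x y z : int -> C) (N : nat).

Lemma sqn_ge0 (a : C) : 0 <= sqn a.
Proof. by rewrite /sqn addr_ge0 ?sqr_ge0. Qed.

Lemma sqn0 : sqn (0 : C) = 0.
Proof. by rewrite /sqn /= expr0n addr0. Qed.

Lemma sqn_real (r : R) : sqn r%:C = r ^+ 2.
Proof. by rewrite /sqn /= expr0n addr0. Qed.

Lemma sqnZ (r : R) (a : C) : sqn (r%:C * a) = r ^+ 2 * sqn a.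
Proof. by case: a => a b; rewrite /sqn /=; ring. Qed.

Lemma sqnN (a : C) : sqn (- a) = sqn a.
Proof. by case: a => a b; rewrite /sqn /=; ring. Qed.

Lemma sqnD_le (a b : C) : sqn (a + b) <= 2 * sqn a + 2 * sqn b.
Proof.
case: a b => [a1 a2] [b1 b2]; rewrite /sqn /=.
by have := sqr_ge0 (a1 - b1); have := sqr_ge0 (a2 - b2); nra.
Qed.

Lemma sqnB_le (a b : C) : sqn (a - b) <= 2 * sqn a + 2 * sqn b.
Proof. by rewrite -(sqnN b) sqnD_le. Qed.

Lemma nonneg_sqn x : nonneg (fun n => sqn (x n)).
Proof. by move=> n; apply: sqn_ge0. Qed.

Lemma l2sq_ge0 x : l2 x -> 0 <= l2sq x.
Proof. exact/zsum_ge0/nonneg_sqn. Qed.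

Lemma l2_le_scale x y (a : R) : l2 y -> 0 <= a ->
  (forall n, sqn (x n) <= a * sqn (y n)) -> l2 x /\ l2sq x <= a * l2sq y.
Proof. by move=> ly a0 xy; apply: zsum_le_scale => //; apply: nonneg_sqn. Qed.

Lemma l2D x y : l2 x -> l2 y ->
  l2 (fun n => x n + y n) /\ l2sq (fun n => x n + y n) <= 2 * l2sq x + 2 * l2sq y.
Proof.
move=> lx ly; apply: zsum_le_combination (fun n => sqnD_le _ _) => //;
  exact: nonneg_sqn.
Qed.

Lemma l2B x y : l2 x -> l2 y -> l2 (subs x y) /\ l2sq (subs x y) <= 2 * l2sq x + 2 * l2sq y.
Proof.
move=> lx ly; apply: zsum_le_combination (fun n => sqnB_le _ _) => //;
  exact: nonneg_sqn.
Qed.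

Lemma l2_zero : l2 (fun _ : int => 0 : C) /\ l2sq (fun _ : int => 0 : C) = 0.
Proof.
have [l0 le0] : l2 (fun _ : int => 0 : C) /\ l2sq (fun _ : int => 0 : C) <= 0.
  apply: zsum_ub => [n|N]; rewrite sqn0 //.
  by rewrite /zpartial big1 // => i _; rewrite addr0.
by split=> //; apply/eqP; rewrite eq_le le0 l2sq_ge0.
Qed.

Lemma subs_self x : subs x x = fun _ => 0.
Proof. by apply: funext => n; rewrite /subs subrr. Qed.

Lemma l2_continuous_bounded (F : (int -> C) -> int -> C) (M : R) : 0 < M ->
  (forall x y, F (subs x y) = subs (F x) (F y)) ->
  (forall x, l2 x -> l2 (F x) /\ l2sq (F x) <= M * l2sq x) -> l2_continuous F.
Proof.
move=> M0 F_subs F_bnd x lx e e0; exists (e / M); split; first exact: divr_gt0.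
move=> y ly yx; rewrite -F_subs.
have [_ /le_lt_trans -> //] := F_bnd _ (l2B ly lx).1.
by rewrite -ltr_pdivlMl // mulrC.
Qed.

Lemma l2_compact0 : l2_compact (fun _ _ => 0 : C).
Proof.
split; first by move=> x _; exact: l2_zero.1.
split; first by move=> a x y _ _; apply: funext => n; rewrite mulr0 addr0.
move=> xs _; exists id, (fun _ => 0); do 2!split => //; first exact: l2_zero.1.
by rewrite subs_self l2_zero.2; apply: cvg_cst.
Qed.

Definition in_window N (n : int) : bool := (- N%:Z <= n) && (n < N%:Z).
Definition trunc N x : int -> C := fun n => if in_window N n then x n else 0.

Lemma l2_trunc N x : l2 x -> l2 (trunc N x).
Proof.
move=> lx; have trunc_le n : sqn (trunc N x n) <= 1 * sqn (x n).
  by rewrite /trunc mul1r; case: ifP => _; rewrite ?sqn0 ?sqn_ge0.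
exact: (l2_le_scale lx ler01 trunc_le).1.
Qed.

Lemma trunc_out N x n : ~~ in_window N n -> trunc N x n = 0.
Proof. by rewrite /trunc => /negbTE ->. Qed.

Lemma zpartial_tail (u : int -> R) N M : nonneg u ->
  zpartial (fun n => if in_window N n then 0 else u n) M + zpartial u N
  <= zpartial u (maxn M N).
Proof.
move=> u0; elim: M => [|M IH]; first by rewrite zpartial0 add0r max0n.
rewrite zpartialS; have [MN|NM] := ltnP M N.
  have -> : in_window N M%:Z by apply/andP; split; lia.
  have -> : in_window N (- M.+1%:Z) by apply/andP; split; lia.
  by rewrite !addr0 (le_trans IH) // nondecreasing_zpartial //; lia.
have -> : in_window N M%:Z = false by apply/negbTE/negP => /andP[]; lia.
have -> : in_window N (- M.+1%:Z) = false by apply/negbTE/negP => /andP[]; lia.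
rewrite (_ : maxn M.+1 N = M.+1); last by lia.
rewrite (_ : maxn M N = M) in IH; last by lia.
by rewrite zpartialS; lra.
Qed.

Lemma trunc_approx x (e : R) : l2 x -> 0 < e -> exists N, l2sq (subs (trunc N x) x) < e.
Proof.
move=> lx e0; have [N xN] := zsum_adherent (nonneg_sqn x) lx e0; exists N.
have tail : (fun n => sqn (subs (trunc N x) x n))
    = (fun n => if in_window N n then 0 else sqn (x n)).
  by apply: funext => n; rewrite /subs /trunc; case: ifP; rewrite ?subrr ?sqn0 ?add0r ?sqnN.
have [_] : l2 (subs (trunc N x) x) /\
    l2sq (subs (trunc N x) x) <= l2sq x - zpartial (fun n => sqn (x n)) N.
  apply: zsum_ub => [n|M]; first exact: sqn_ge0.
  rewrite tail.
  have := zpartial_tail N M (nonneg_sqn x).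
  have := zpartial_le_zsum (maxn M N) (nonneg_sqn x) lx.
  rewrite /l2sq; lra.
rewrite /l2sq; lra.
Qed.

Lemma top_mixing_conj (T B S Si : (int -> C) -> int -> C) :
  l2_maps S -> l2_maps Si -> (forall x, Si (S x) = x) -> (forall y, S (Si y) = y) ->
  l2_continuous Si -> top_mixing B -> (forall x, T x = Si (B (S x))) -> top_mixing T.
Proof.
move=> lS lSi SiK SK Si_cont B_mix TE.
have iterT k x : iter k T x = Si (iter k B (S x)).
  by elim: k x => [|k IH] x /=; rewrite ?SiK // IH TE SK.
have open_pre U : l2_open U -> l2_open (fun z => l2 z /\ U (Si z)).
  case=> _ U_open; split=> [z [] //|z [lz Uz]].
  have [e [e0 eU]] := U_open _ Uz; have [d [d0 dSi]] := Si_cont z lz e e0.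
  by exists d; split=> // w lw wz; split=> //; apply: eU; [apply: lSi|apply: dSi].
move=> U1 U2 oU1 oU2 [x U1x] [y U2y].
have lx := oU1.1 _ U1x; have ly := oU2.1 _ U2y.
have [||N mixN] := B_mix _ _ (open_pre _ oU1) (open_pre _ oU2).
- by exists (S x); split; [apply: lS|rewrite SiK].
- by exists (S y); split; [apply: lS|rewrite SiK].
by exists N => k kN; have [z [[_ ?] [_ ?]]] := mixN k kN; exists (Si z); rewrite iterT SK.
Qed.

End L2.

Section Gamma.
Variable R : realType.
Local Notation g := (gamma R).

Lemma gamma_nat (j : nat) : g j%:Z * j.+1%:R = (1 - (4 ^+ j.+1)^-1) / 2.
Proof.
rewrite /gamma /= (_ : - (2 * (j%:Z + 1)) = - (2 * j.+1)%N%:Z); last by lia.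
rewrite -exprnN exprM (_ : (2 : R) ^+ 2 = 4); last by rewrite expr2; lra.
rewrite (_ : j%:Z + 1 = j.+1); last by lia.
by field; rewrite expf_neq0 ?pnatr_eq0 // addrC natr1 pnatr_eq0.
Qed.

Lemma gamma_Negz (j : nat) : g (Negz j.+1) * j.+1%:R = (4 ^+ j.+1 - 1) / 2.
Proof.
rewrite /gamma /= (_ : - (2 * (Negz j.+1 + 1)) = (2 * j.+1)%N%:Z); last by lia.
rewrite (_ : Negz j.+1 + 1 = - j.+1%:Z); last by lia.
rewrite -exprnP exprM (_ : (2 : R) ^+ 2 = 4); last by rewrite expr2; lra.
by rewrite intrN; field; rewrite addrC natr1 pnatr_eq0.
Qed.

Lemma gamma_gt0 n : 0 < g n.
Proof.
have pos (j : nat) : 0 < (j.+1%:R : R) by rewrite ltr0n.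
case: n => [j|[|j]].
- rewrite -(pmulr_lgt0 _ (pos j)) gamma_nat divr_gt0 // subr_gt0 invf_lt1 ?exprn_gt0 //.
  by rewrite exprn_egt1 //; lra.
- by rewrite /gamma /= ln_gt0 //; lra.
- rewrite -(pmulr_lgt0 _ (pos j)) gamma_Negz divr_gt0 // subr_gt0.
  by rewrite exprn_egt1 //; lra.
Qed.

Lemma sqrt_gamma_neq0 n : Num.sqrt (g n) != 0.
Proof. by rewrite gt_eqF // sqrtr_gt0 gamma_gt0. Qed.

Lemma gamma_nat_bounds (j : nat) : 3 / 8 <= g j%:Z * j.+1%:R <= 1 / 2.
Proof.
rewrite gamma_nat; have P4 : 4 <= (4 : R) ^+ j.+1.
  by rewrite -[leLHS]expr1 ler_eXn2l //; lra.
have x0 : 0 < ((4 : R) ^+ j.+1)^-1 by rewrite invr_gt0; lra.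
have x4 : ((4 : R) ^+ j.+1)^-1 <= 1 / 4 by rewrite -invf_div divr1 lef_pV2 ?posrE //; lra.
by apply/andP; split; lra.
Qed.

Lemma gamma_natS_le (k : nat) : g k.+1%:Z <= 1 / 4.
Proof.
have /andP[_] := gamma_nat_bounds k.+1.
have := gamma_gt0 k.+1; have : 2 <= (k.+2%:R : R) by rewrite ler_nat.
nra.
Qed.
End Gamma.

Section Weights.
Variable R : realType.
Local Notation g := (gamma R).

Definition wr (j : int) : R := if 0 <= j then 4 else 4^-1.

(* The weights of B_w in the orthonormal basis z^n / sqrt(gamma_n) of A^2(Omega). *)
Definition alpha (j : int) : R := wr j * Num.sqrt (g (j - 1)) / Num.sqrt (g j).

Lemma alpha_sqr j : alpha j ^+ 2 = wr j ^+ 2 * g (j - 1) / g j.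
Proof. by rewrite /alpha expr_div_n exprMn !sqr_sqrtr // ltW ?gamma_gt0. Qed.

Lemma alpha_neq0 j : alpha j != 0.
Proof.
rewrite /alpha !mulf_neq0 ?invr_eq0 ?sqrt_gamma_neq0 // /wr.
by case: ifP; rewrite ?invr_eq0 //; lra.
Qed.

Lemma alpha_sqr_pos_bounds j : 1 <= j -> 2 <= alpha j ^+ 2 <= 43.
Proof.
case: j => [[|k]|j] // _; rewrite alpha_sqr /wr /= (_ : k.+1%:Z - 1 = k); last by lia.
have /andP[lo0 hi0] := gamma_nat_bounds R k.
have /andP[lo1 hi1] := gamma_nat_bounds R k.+1.
have g0 := gamma_gt0 R k; have g1 := gamma_gt0 R k.+1.
move: lo1 hi1; rewrite -natr1; set d : R := k.+1%:R => lo1 hi1.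
have d1 : 1 <= d by rewrite ler1n.
rewrite ler_pdivlMr // ler_pdivrMr // (_ : 4 ^+ 2 = 16 :> R); last by rewrite expr2; lra.
apply/andP; split; nra.
Qed.

Lemma alpha_sqr_neg_le j : j <= -2 -> alpha j ^+ 2 <= 1 / 2.
Proof.
case: j => [k|[|j]] //= _; rewrite alpha_sqr /wr /= (_ : Negz j.+1 - 1 = Negz j.+2); last by lia.
have g1 := gamma_Negz R j; have g2 := gamma_Negz R j.+1.
have g1_0 := gamma_gt0 R (Negz j.+1); have g2_0 := gamma_gt0 R (Negz j.+2).
have P4 : 4 <= (4 : R) ^+ j.+1 by rewrite -[leLHS]expr1 ler_eXn2l //; lra.
rewrite [4 ^+ j.+2]exprS -[j.+2%:R]natr1 in g2.
move: g1 g2 P4; set d : R := j.+1%:R; set P : R := 4 ^+ j.+1 => g1 g2 P4.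
have d0 : 0 < d by rewrite ltr0n.
rewrite ler_pdivrMr // (_ : (4^-1) ^+ 2 = 1 / 16 :> R); last by rewrite expr2; field.
have : g (Negz j.+2) * d <= 8 * (g (Negz j.+1) * d) by nra.
rewrite mulrA ler_pM2r //; lra.
Qed.

Lemma alpha_bounded : exists M, forall j, alpha j ^+ 2 <= M.
Proof.
exists (43 + alpha 0 ^+ 2 + alpha (-1) ^+ 2) => j.
have a0 := sqr_ge0 (alpha 0); have a1 := sqr_ge0 (alpha (-1)).
have [j1|[jm2|[->|->]]] : 1 <= j \/ j <= -2 \/ j = 0 \/ j = -1 by lia.
- by have /andP[_] := alpha_sqr_pos_bounds j1; lra.
- by have := alpha_sqr_neg_le jm2; lra.
all: lra.
Qed.

End Weights.

Section Similarity.
Variable R : realType.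
Local Notation C := R[i].
Local Notation g := (gamma R).
Local Notation "x %:C" := (real_complex R x).
Implicit Types (x y c : int -> C) (n : int).

Definition Dg c : int -> C := fun n => (Num.sqrt (g n))%:C * c n.
Definition Dg_inv c : int -> C := fun n => ((Num.sqrt (g n))^-1)%:C * c n.

Lemma Dg_invK : cancel Dg Dg_inv.
Proof.
move=> c; apply: funext => n.
by rewrite /Dg_inv /Dg mulrA -rmorphM /= mulVf ?sqrt_gamma_neq0 // mul1r.
Qed.

Lemma Dg_subs c c' : Dg (subs c c') = subs (Dg c) (Dg c').
Proof. by apply: funext => n; rewrite /Dg /subs mulrBr. Qed.

Lemma A2_weight_Dg c : (fun n => g n * sqn (c n)) = (fun n => sqn (Dg c n)).
Proof. by apply: funext => n; rewrite sqnZ sqr_sqrtr // ltW ?gamma_gt0. Qed.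

Lemma A2_Dg c : A2 c = l2 (Dg c).
Proof. by rewrite /A2 A2_weight_Dg. Qed.

Lemma a2sq_Dg c : a2sq c = l2sq (Dg c).
Proof. by rewrite /a2sq A2_weight_Dg. Qed.

Definition embed x : int -> C := Dg (Phi x).

Definition embed_coef n : R := Num.sqrt (g n) * bcoef R (n - 1).

Lemma embed_coef_le0 n : n <= 0 -> embed_coef n = 0.
Proof. by move=> n0; rewrite /embed_coef /bcoef ifF ?mulr0 //; apply/negbTE; lia. Qed.

Lemma embed_coefS (k : nat) : embed_coef k.+1 = Num.sqrt (g k.+1).
Proof. by rewrite /embed_coef /bcoef (_ : 0 <= k.+1%:Z - 1) ?mulr1 //; lia. Qed.

Lemma embed_coef_sqr_le n : embed_coef n ^+ 2 <= 1 / 4.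
Proof.
have [n0|] := lerP n 0; first by rewrite embed_coef_le0 // expr0n /=; lra.
case: n => [[|k]|] // _.
by rewrite embed_coefS sqr_sqrtr ?gamma_natS_le // ltW ?gamma_gt0.
Qed.

Lemma embedE x n : embed x n = (embed_coef n)%:C * x (n - 1) + x n.
Proof.
rewrite /embed /Dg /Phi /fn eqxx (_ : (n == n - 1) = false); last by apply/eqP; lia.
rewrite subrK eqxx /acoef /embed_coef mulrDr [X in _ + X]mulrCA -rmorphM /=.
by rewrite mulfV ?sqrt_gamma_neq0 // mulr1; ring.
Qed.

(* embed fixes the coordinates n <= 0 and is unitriangular, so it is inverted by
   forward substitution. *)
Fixpoint embed_inv_nat y (k : nat) : C :=
  if k is k'.+1 then y k - (Num.sqrt (g k))%:C * embed_inv_nat y k' else y 0.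

Definition embed_inv y n : C :=
  if n is Posz k then embed_inv_nat y k else y n.

Lemma embedK : cancel embed_inv embed.
Proof.
move=> y; apply: funext => n; rewrite embedE.
case: n => [[|k]|k].
- by rewrite embed_coef_le0 // mul0r add0r.
- by rewrite embed_coefS (_ : k.+1%:Z - 1 = k) /=; [ring|lia].
- by rewrite embed_coef_le0 // mul0r add0r.
Qed.

Lemma embed_invK : cancel embed embed_inv.
Proof.
move=> x; apply: funext => -[k|k] /=; last by rewrite embedE embed_coef_le0 // mul0r add0r.
elim: k => [|k IH] /=; first by rewrite embedE embed_coef_le0 // mul0r add0r.
by rewrite IH embedE embed_coefS (_ : k.+1%:Z - 1 = k) /=; [ring|lia].
Qed.

Lemma embed_linear : l2_linear embed.
Proof. by move=> a x y _ _; apply: funext => n; rewrite !embedE; ring. Qed.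

Lemma embed_subs x y : embed (subs x y) = subs (embed x) (embed y).
Proof. by apply: funext => n; rewrite /subs !embedE; ring. Qed.

Lemma embed_inv_subs x y : embed_inv (subs x y) = subs (embed_inv x) (embed_inv y).
Proof.
apply: funext => -[k|k] //=; rewrite /subs.
by elim: k => [|k IH] //=; rewrite IH /subs /embed_inv /=; ring.
Qed.

Lemma embed_bounded x : l2 x -> l2 (embed x) /\ l2sq (embed x) <= 4 * l2sq x.
Proof.
move=> lx; have [lx1 x1_le] := zsum_shift (-1) (nonneg_sqn x) lx.
have [le1 le2] : l2 (embed x) /\ l2sq (embed x) <=
    2 * zsum (fun n => sqn (x (n - 1))) + 2 * l2sq x.
  apply: zsum_le_combination => //; try exact: nonneg_sqn.
  move=> n; rewrite embedE (le_trans (sqnD_le _ _)) // sqnZ.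
  have c1 : embed_coef n ^+ 2 <= 1 by have := embed_coef_sqr_le n; lra.
  by have := ler_piMl (sqn_ge0 (x (n - 1))) c1; lra.
by split=> //; move: le2 x1_le; rewrite /l2sq; lra.
Qed.

Lemma sqn_embed_inv_natS y k :
  sqn (embed_inv_nat y k.+1) <= 2 * sqn (y k.+1%:Z) + 1 / 2 * sqn (embed_inv_nat y k).
Proof.
rewrite /= (le_trans (sqnB_le _ _)) // sqnZ sqr_sqrtr; last exact/ltW/gamma_gt0.
by have := ler_wpM2r (sqn_ge0 (embed_inv_nat y k)) (gamma_natS_le R k); lra.
Qed.

Lemma sum_sqn_embed_inv_nat y N :
  \sum_(i < N) sqn (embed_inv_nat y i) + 2 * sqn (embed_inv_nat y N)
  <= 4 * \sum_(i < N.+1) sqn (y i%:Z).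
Proof.
elim: N => [|N IH]; first by rewrite big_ord0 big_ord1 /=; have := sqn_ge0 (y 0); lra.
rewrite big_ord_recr /= [X in _ <= 4 * X]big_ord_recr /=.
by have := sqn_embed_inv_natS y N; lra.
Qed.

Lemma embed_inv_bounded y : l2 y -> l2 (embed_inv y) /\ l2sq (embed_inv y) <= 4 * l2sq y.
Proof.
move=> ly; apply: zsum_ub; first exact: nonneg_sqn.
move=> N; apply: (@le_trans _ _ (4 * zpartial (fun n => sqn (y n)) N.+1)); last first.
  by apply: ler_wpM2l; [lra|exact: zpartial_le_zsum (nonneg_sqn y) ly].
rewrite /zpartial big_split [X in _ <= _ * X]big_split /=.
rewrite [X in _ <= _ * (_ + X)]big_ord_recr /=.
have neg0 : 0 <= \sum_(i < N) sqn (y (- i.+1%:Z)) by apply: sumr_ge0 => i _; apply: sqn_ge0.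
have := sum_sqn_embed_inv_nat y N; have := sqn_ge0 (embed_inv_nat y N).
have := sqn_ge0 (y (- N.+1%:Z)); rewrite /embed_inv /=; lra.
Qed.

End Similarity.

Section WeightedShift.
Variable R : realType.
Local Notation C := R[i].
Local Notation "x %:C" := (real_complex R x).
Implicit Types (x y c : int -> C).

Definition Balpha : (int -> C) -> int -> C := Bw (fun j => (alpha R j)%:C).

Lemma Balpha_subs x y : Balpha (subs x y) = subs (Balpha x) (Balpha y).
Proof. by apply: funext => n; rewrite /subs /Balpha /Bw mulrBr. Qed.

Lemma Balpha_bounded : exists M, 0 < M /\
  forall y, l2 y -> l2 (Balpha y) /\ l2sq (Balpha y) <= M * l2sq y.
Proof.
have [M aM] := alpha_bounded R; have M0 : 0 <= M := le_trans (sqr_ge0 _) (aM 0).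
exists (M + 1); split=> [|y ly]; first lra.
have [ly1 y1_le] := zsum_shift 1 (nonneg_sqn y) ly.
have M1 : 0 <= M + 1 by lra.
have B_le n : sqn (Balpha y n) <= (M + 1) * sqn (y (n + 1)).
  by rewrite /Balpha /Bw sqnZ ler_wpM2r ?sqn_ge0 //; have := aM (n + 1); lra.
have [lB B_bnd] := l2_le_scale ly1 M1 B_le.
by split=> //; apply: (le_trans B_bnd); rewrite ler_wpM2l.
Qed.

Lemma Dg_Balpha c : Dg_inv (Balpha (Dg c)) = Bw (w4 R) c.
Proof.
apply: funext => n; rewrite /Dg_inv /Balpha /Bw /Dg /alpha (_ : n + 1 - 1 = n); last by lia.
have w4E : w4 R (n + 1) = (wr R (n + 1))%:C.
  by rewrite /w4 /wr; case: ifP; rewrite ?fmorphV rmorph_nat.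
rewrite w4E !rmorphM /= !fmorphV /=.
have := sqrt_gamma_neq0 R n; have := sqrt_gamma_neq0 R (n + 1).
rewrite -!(fmorph_eq0 (real_complex R)) => g1 g0.
by field; rewrite g0 g1.
Qed.
End WeightedShift.

Section Mixing.
Variable R : realType.
Local Notation C := R[i].
Local Notation "x %:C" := (real_complex R x).
Local Notation alpha := (alpha R).
Local Notation Balpha := (@Balpha R).
Implicit Types (x y : int -> C) (N : nat).

Lemma halving_eventually_le (s : nat -> R) K0 : (forall k, 0 <= s k) ->
  (forall k, (K0 <= k)%N -> s k.+1 <= s k / 2) ->
  forall e, 0 < e -> exists K, forall k, (K <= k)%N -> s k <= e.
Proof.
move=> s0 s_half e e0.
have decay j : s (K0 + j)%N * 2 ^+ j <= s K0.
  elim: j => [|j IH]; first by rewrite addn0 mulr1.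
  have := s_half _ (leq_addr j K0); rewrite addnS exprS.
  have : 0 <= 2 ^+ j :> R by apply: exprn_ge0; lra.
  nra.
set J := Num.Def.archi_bound (s K0 / e).
have J_gt : s K0 / e < J%:R by apply: archi_boundP; rewrite divr_ge0 // ltW.
exists (K0 + J)%N => k kJ.
have [j -> Jj] : exists2 j, k = (K0 + j)%N & (J <= j)%N by exists (k - K0)%N; lia.
have pow_j : j.+1%:R <= 2 ^+ j :> R by rewrite -natrX ler_nat ltn_expl.
have j1 : (J%:R : R) <= j.+1%:R by rewrite ler_nat leqW.
rewrite ltr_pdivrMr // in J_gt.
have : s (K0 + j)%N * j.+1%:R < e * j.+1%:R.
  have := ler_wpM2l (s0 (K0 + j)%N) pow_j; have := ler_wpM2r (ltW e0) j1.
  by have := decay j; lra.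
by rewrite ltr_pM2r ?ltr0n // => /ltW.
Qed.

Fixpoint wprod (n : int) (k : nat) : R :=
  if k is k'.+1 then alpha (n + 1) * wprod (n + 1) k' else 1.

Lemma wprod_neq0 n k : wprod n k != 0.
Proof. by elim: k n => [|k IH] n /=; rewrite ?oner_neq0 // mulf_neq0 ?alpha_neq0. Qed.

Lemma wprodSr n k : wprod n k.+1 = wprod n k * alpha (n + k%:Z + 1).
Proof.
elim: k n => [|k IH] n; first by rewrite /= mulr1 mul1r addr0.
rewrite -[LHS]/(alpha (n + 1) * wprod (n + 1) k.+1) IH mulrA /=.
by rewrite (_ : n + 1 + k%:Z + 1 = n + k.+1%:Z + 1) //; lia.
Qed.

Lemma iter_Balpha k x n : iter k Balpha x n = (wprod n k)%:C * x (n + k%:Z).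
Proof.
elim: k n => [|k IH] n /=; first by rewrite mul1r addr0.
rewrite [in LHS]/Balpha /Bw IH mulrA -rmorphM; congr (_ * x _); lia.
Qed.

Lemma wprod_left_small (m : int) e : 0 < e ->
  exists K, forall k, (K <= k)%N -> wprod (m - k%:Z) k ^+ 2 <= e.
Proof.
apply: (halving_eventually_le (K0 := (absz m).+2)) => [k|k mk]; first exact: sqr_ge0.
rewrite (_ : m - k.+1%:Z = m - k%:Z - 1); last by lia.
rewrite /= subrK exprMn.
have : alpha (m - k%:Z) ^+ 2 <= 1 / 2 by apply: alpha_sqr_neg_le; lia.
by have := sqr_ge0 (wprod (m - k%:Z) k); nra.
Qed.

Lemma wprod_right_large (m : int) e : 0 < e ->
  exists K, forall k, (K <= k)%N -> (wprod m k ^+ 2)^-1 <= e.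
Proof.
apply: (halving_eventually_le (K0 := absz m)) => [k|k mk].
  by rewrite invr_ge0 sqr_ge0.
rewrite wprodSr exprMn invfM.
have /andP[a2 _] : 2 <= alpha (m + k%:Z + 1) ^+ 2 <= 43 by apply: alpha_sqr_pos_bounds; lia.
have : (alpha (m + k%:Z + 1) ^+ 2)^-1 <= 1 / 2.
  by rewrite -[1 / 2]invf_div divr1 lef_pV2 ?posrE //; lra.
have : 0 <= (wprod m k ^+ 2)^-1 by rewrite invr_ge0 sqr_ge0.
have : 0 <= (alpha (m + k%:Z + 1) ^+ 2)^-1 by rewrite invr_ge0 sqr_ge0.
nra.
Qed.

Lemma eventually_in_window (P : int -> nat -> Prop) N :
  (forall m, exists K, forall k, (K <= k)%N -> P m k) ->
  exists K, forall k, (K <= k)%N -> forall m, in_window N m -> P m k.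
Proof.
move=> P_ev; elim: N => [|N [K IH]]; first by exists 0%N => k _ m /andP[]; lia.
have [K1 P1] := P_ev N%:Z; have [K2 P2] := P_ev (- N.+1%:Z).
exists (maxn K (maxn K1 K2)) => k kK m /andP[m1 m2].
have [->|mN] := eqVneq m N; first by apply: P1; lia.
have [->|mN1] := eqVneq m (- N.+1%:Z); first by apply: P2; lia.
by apply: IH; [lia|apply/andP; split; lia].
Qed.

Lemma multiplier_shift_small x N (c : nat -> int -> R) (s : nat -> int) e :
  l2 x -> (forall n, ~~ in_window N n -> x n = 0) -> 0 < e ->
  (forall m d, 0 < d -> exists K, forall k, (K <= k)%N -> c k m ^+ 2 <= d) ->
  exists K, forall k, (K <= k)%N ->
    let y := fun n => (c k (n + s k))%:C * x (n + s k) in l2 y /\ l2sq y <= e.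
Proof.
move=> lx x_out e0 c_small; have L0 := l2sq_ge0 lx.
set d := e / (l2sq x + 1); have d0 : 0 < d by rewrite divr_gt0 //; lra.
have [K cK] := eventually_in_window N (fun m => c_small m d d0).
exists K => k kK y.
have [lxs xs_le] := zsum_shift (s k) (nonneg_sqn x) lx.
have [ly y_le] : l2 y /\ l2sq y <= d * l2sq (fun n => x (n + s k)).
  apply: l2_le_scale (ltW d0) _ => // n; rewrite /y sqnZ.
  have [w|/x_out ->] := boolP (in_window N (n + s k)); last by rewrite sqn0 !mulr0.
  by rewrite ler_wpM2r ?sqn_ge0 ?cK.
split=> //; apply: (le_trans y_le); apply: (le_trans (ler_wpM2l (ltW d0) xs_le)).
rewrite /d -mulrA ger_pMr // mulrC ler_pdivrMr -/(l2sq x); lra.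
Qed.

Definition Falpha k y : int -> C := fun n => ((wprod (n - k%:Z) k)^-1)%:C * y (n - k%:Z).

Lemma iter_Balpha_Falpha k y : iter k Balpha (Falpha k y) = y.
Proof.
apply: funext => n; rewrite iter_Balpha /Falpha addrK mulrA -rmorphM /=.
by rewrite mulfV ?wprod_neq0 // mul1r.
Qed.

Lemma iter_BalphaD k x y :
  iter k Balpha (fun n => x n + y n) = fun n => iter k Balpha x n + iter k Balpha y n.
Proof. by apply: funext => n; rewrite !iter_Balpha mulrDr. Qed.

Lemma iter_Balpha_small x N e : l2 x -> (forall n, ~~ in_window N n -> x n = 0) -> 0 < e ->
  exists K, forall k, (K <= k)%N -> l2 (iter k Balpha x) /\ l2sq (iter k Balpha x) <= e.
Proof.
move=> lx x_out e0.
have [|K small] := multiplier_shift_small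
  (c := fun k m => wprod (m - k%:Z) k) (fun k => k%:Z) lx x_out e0.
  by move=> m d; apply: wprod_left_small.
exists K => k /small; congr (l2 _ /\ l2sq _ <= e); apply: funext => n;
  by rewrite iter_Balpha addrK.
Qed.

Lemma Falpha_small y N e : l2 y -> (forall n, ~~ in_window N n -> y n = 0) -> 0 < e ->
  exists K, forall k, (K <= k)%N -> l2 (Falpha k y) /\ l2sq (Falpha k y) <= e.
Proof.
move=> ly y_out e0.
have [|K small] := multiplier_shift_small
  (c := fun k m => (wprod m k)^-1) (fun k => - k%:Z) ly y_out e0.
  by move=> m d d0; have [K wK] := wprod_right_large m d0; exists K => k /wK; rewrite exprVn.
by exists K.
Qed.

(* Kitai's criterion: approximate by finitely supported x', y'; then x' + F_k y' is close
   to x and B^k (x' + F_k y') = B^k x' + y' is close to y. *)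
Lemma Balpha_mixing : top_mixing Balpha.
Proof.
move=> U1 U2 [U1l U1o] [U2l U2o] [x U1x] [y U2y].
have lx := U1l _ U1x; have ly := U2l _ U2y.
have [e1 [e1_0 U1e]] := U1o _ U1x; have [e2 [e2_0 U2e]] := U2o _ U2y.
have e1' : 0 < e1 / 4 by rewrite divr_gt0 //; lra.
have e2' : 0 < e2 / 4 by rewrite divr_gt0 //; lra.
have [N1 x_approx] := trunc_approx lx e1'; have [N2 y_approx] := trunc_approx ly e2'.
set x' := trunc N1 x; set y' := trunc N2 y.
have lx' : l2 x' := l2_trunc N1 lx; have ly' : l2 y' := l2_trunc N2 ly.
have [K1 Bx'] := iter_Balpha_small lx' (@trunc_out _ N1 x) e2'.
have [K2 Fy'] := Falpha_small ly' (@trunc_out _ N2 y) e1'.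
exists (maxn K1 K2) => k kK; exists (fun n => x' n + Falpha k y' n).
have [lB B_le] := Bx' k (leq_trans (leq_maxl _ _) kK).
have [lF F_le] := Fy' k (leq_trans (leq_maxr _ _) kK).
split.
  apply: U1e; first exact: (l2D lx' lF).1.
  have -> : subs (fun n => x' n + Falpha k y' n) x = fun n => subs x' x n + Falpha k y' n.
    by apply: funext => n; rewrite /subs addrAC.
  by have [_ /le_lt_trans ->] := l2D (l2B lx' lx).1 lF; lra.
rewrite iter_BalphaD iter_Balpha_Falpha; apply: U2e; first exact: (l2D lB ly').1.
have -> : subs (fun n => iter k Balpha x' n + y' n) y = fun n => iter k Balpha x' n + subs y' y n.
  by apply: funext => n; rewrite /subs addrA.
by have [_ /le_lt_trans ->] := l2D lB (l2B ly' ly).1; lra.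
Qed.

End Mixing.

Section Conjugation.
Variable R : realType.
Local Notation C := R[i].
Implicit Types (x y c lam : int -> C).

Lemma embed_maps : l2_maps (@embed R).
Proof. by move=> x /embed_bounded[]. Qed.

Lemma embed_inv_maps : l2_maps (@embed_inv R).
Proof. by move=> y /embed_inv_bounded[]. Qed.

Lemma embed_continuous : l2_continuous (@embed R).
Proof.
apply: (@l2_continuous_bounded _ _ 4); [lra|exact: embed_subs|exact: embed_bounded].
Qed.

Lemma embed_inv_continuous : l2_continuous (@embed_inv R).
Proof.
apply: (@l2_continuous_bounded _ _ 4); [lra|exact: embed_inv_subs|exact: embed_inv_bounded].
Qed.

Lemma Phi_embed x : Phi x = Dg_inv (embed x).
Proof. by rewrite /embed Dg_invK. Qed.

Lemma Phi_A2 lam : l2 lam -> A2 (Phi lam).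
Proof. by rewrite A2_Dg => /embed_maps. Qed.

Lemma Phi_continuous lam : l2 lam -> forall e : R, 0 < e ->
  exists d : R, 0 < d /\ forall mu, l2 mu -> l2sq (subs mu lam) < d ->
    a2sq (subs (Phi mu) (Phi lam)) < e.
Proof.
move=> l_lam e e0; have [d [d0 dS]] := embed_continuous l_lam e0.
by exists d; split=> // mu l_mu mu_d; rewrite a2sq_Dg Dg_subs; apply: dS.
Qed.

Lemma Phi_embed_inv y : Phi (embed_inv y) = Dg_inv y.
Proof. by rewrite Phi_embed embedK. Qed.

Lemma Phi_dense c : A2 c -> forall e : R, 0 < e ->
  exists lam, l2 lam /\ A2 (subs c (Phi lam)) /\ a2sq (subs c (Phi lam)) < e.
Proof.
rewrite A2_Dg => cA e e0; exists (embed_inv (Dg c)).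
rewrite Phi_embed_inv Dg_invK subs_self A2_Dg a2sq_Dg.
have -> : Dg (fun _ => 0) = fun _ => 0 :> C by apply: funext => n; rewrite /Dg mulr0.
by rewrite (l2_zero R).2; split; [exact: embed_inv_maps|split; [exact: (l2_zero R).1|]].
Qed.

Definition Tw lam : int -> C := embed_inv (Balpha (embed lam)).

Lemma Phi_Tw lam : Phi (Tw lam) = Bw (w4 R) (Phi lam).
Proof. by rewrite Phi_embed_inv /embed Dg_Balpha. Qed.

Lemma embed_Tw lam : embed (Tw lam) = Balpha (embed lam).
Proof. exact: embedK. Qed.

Lemma Tw_bounded : exists M : R, 0 < M /\
  forall x, l2 x -> l2 (Tw x) /\ l2sq (Tw x) <= M * l2sq x.
Proof.
have [M [M0 BM]] := Balpha_bounded R; exists (16 * M); split=> [|x lx]; first lra.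
have [l1 b1] := embed_bounded lx; have [l2' b2] := BM _ l1.
have [l3 b3] := embed_inv_bounded l2'; split=> //.
by have := l2sq_ge0 lx; have := l2sq_ge0 l1; have := l2sq_ge0 l2'; nra.
Qed.

Lemma Tw_continuous : l2_continuous Tw.
Proof.
have [M [M0 TM]] := Tw_bounded; apply: l2_continuous_bounded M0 _ TM => x y.
by rewrite /Tw embed_subs Balpha_subs embed_inv_subs.
Qed.

Lemma Tw_mixing : top_mixing Tw.
Proof.
exact: (top_mixing_conj embed_maps embed_inv_maps (@embed_invK R) (@embedK R) embed_inv_continuous
  (@Balpha_mixing R) (fun _ => erefl)).
Qed.


End Conjugation.

Theorem proposition4p4 (R : realType) :
  (* the inclusion H -> A^2(Omega), lam |-> sum_n lam_n f_n, is well defined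
     and continuous *)
  ((forall lam : int -> R[i], l2 lam -> A2 (Phi lam)) /\
   (forall lam : int -> R[i], l2 lam -> forall e : R, 0 < e ->
      exists d : R, 0 < d /\
        forall mu, l2 mu -> l2sq (subs mu lam) < d ->
          a2sq (subs (Phi mu) (Phi lam)) < e)) /\
  (* it has dense range *)
  (forall c : int -> R[i], A2 c -> forall e : R, 0 < e ->
     exists lam, l2 lam /\ A2 (subs c (Phi lam)) /\ a2sq (subs c (Phi lam)) < e) /\
  (* B_w is an operator on H (read in the coordinates lam), topologically
     mixing, and similar to a compact perturbation of a bilateral weighted
     backward shift on l^2(Z) *)
  (exists T : (int -> R[i]) -> (int -> R[i]),
     (forall lam, l2 lam -> l2 (T lam) /\ Phi (T lam) = Bw (w4 R) (Phi lam)) /\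
     l2_continuous T /\
     top_mixing T /\
     exists (S Sinv : (int -> R[i]) -> (int -> R[i])) (alpha : int -> R[i])
            (K : (int -> R[i]) -> (int -> R[i])),
       l2_maps S /\ l2_maps Sinv /\ l2_linear S /\
       l2_continuous S /\ l2_continuous Sinv /\
       (forall x, l2 x -> Sinv (S x) = x /\ S (Sinv x) = x) /\
       bounded_weights alpha /\ l2_compact K /\
       forall x, l2 x ->
         S (T x) = (fun n => Bw alpha (S x) n + K (S x) n)).
Proof.
split; first by split; [exact: Phi_A2|exact: Phi_continuous].
split; first exact: Phi_dense.
have [M [_ TM]] := Tw_bounded R.
exists (@Tw R); split; first by move=> lam /TM[? _]; split; last exact: Phi_Tw.
split; first exact: Tw_continuous.
split; first exact: Tw_mixing.
(* B_w is in fact similar to the weighted shift B_alpha itself: the perturbation is 0. *)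
exists (@embed R), (@embed_inv R), (fun j => (alpha R j)%:C%C), (fun _ _ => 0).
split; first exact: embed_maps.
split; first exact: embed_inv_maps.
split; first exact: embed_linear.
split; first exact: embed_continuous.
split; first exact: embed_inv_continuous.
split; first by move=> x _; rewrite embed_invK embedK.
split; first by have [N aN] := alpha_bounded R; exists N => n; rewrite sqn_real.
split; first exact: l2_compact0.
by move=> x _; rewrite embed_Tw; apply: funext => n; rewrite addr0.
Qed.
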